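(* If $G$ is a finite connected graph, then $\mathrm{gp_e}(G) \le 2\cdot \mathrm{ip_e}(G)$.
   Context: A geodesic (isometric path) in a graph is a shortest path between its endpoints. A set $S$ of edges of a graph $G$ is an edge general position set if no geodesic of $G$ contains three edges of $S$; $\mathrm{gp_e}(G)$ is the maximum cardinality of an edge general position set of $G$. An isometric path edge cover of $G$ is a collection of isometric paths of $G$ such that every edge of $G$ lies on at least one path of the collection; $\mathrm{ip_e}(G)$ is the minimum cardinality of an isometric path edge cover of $G$. *)

From mathcomp Require Import all_boot.
Set Implicit Arguments. Unset Strict Implicit. Unset Printing Implicit Defensive.

Section Graphs.
Variable T : finType.
Variable g : rel T.

Definition simple_graph := symmetric g /\ irreflexive g.
Definition connected_graph := forall x y : T, connect g x y.

Definition edge_set : {set {set T}} :=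
  [set e | [exists x, exists y, g x y && (e == [set x; y])]].

(* A walk is given by its start vertex x and the list p of subsequent
   vertices (path g x p); its length is size p. *)
Definition walk_edges (x : T) (p : seq T) : {set {set T}} :=
  [set e | has (fun ab : T * T => e == [set ab.1; ab.2]) (zip (x :: p) p)].

Definition geodesic (x : T) (p : seq T) : Prop :=
  path g x p /\
  forall q : seq T, path g x q -> last x q = last x p -> size p <= size q.

Definition edge_gp_set (S : {set {set T}}) : Prop :=
  S \subset edge_set /\
  forall x p, geodesic x p -> #|S :&: walk_edges x p| <= 2.

Definition is_gpe (n : nat) : Prop :=
  (exists S, edge_gp_set S /\ #|S| = n) /\
  (forall S, edge_gp_set S -> #|S| <= n).

Definition ip_edge_cover (C : seq (T * seq T)) : Prop :=
  (forall c, c \in C -> geodesic c.1 c.2) /\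
  (forall e, e \in edge_set -> exists2 c, c \in C & e \in walk_edges c.1 c.2).

Definition is_ipe (n : nat) : Prop :=
  (exists C, ip_edge_cover C /\ size C = n) /\
  (forall C, ip_edge_cover C -> n <= size C).

End Graphs.

From mathcomp Require Import all_boot.

(* Every edge of an edge general position set S lies on some path of an
   isometric path edge cover C, and each path of C, being a geodesic, contains
   at most two edges of S; hence |S| <= 2 |C|. *)

Section CardCover.
Variables (I : eqType) (U : finType).

Lemma leq_card_big_setU (r : seq I) (F : I -> {set U}) :
  #|\bigcup_(i <- r) F i| <= \sum_(i <- r) #|F i|.
Proof.
elim/big_rec2: _ => [|i n A _ leAn]; first by rewrite cards0.
by rewrite (leq_trans (leq_card_setU (F i) A).1) ?leq_add2l.
Qed.

Lemma card_covered_leq (k : nat) (r : seq I) (W : I -> {set U}) (S : {set U}) :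
  S \subset \bigcup_(i <- r) W i ->
  (forall i, i \in r -> #|S :&: W i| <= k) ->
  #|S| <= k * size r.
Proof.
move=> /setIidPl defS leSk; rewrite -defS (big_morph _ (setIUr S) (setI0 S)).
apply: leq_trans (leq_card_big_setU _ _) _.
rewrite -sum1_size big_distrr /= big_seq [leqRHS]big_seq.
by apply: leq_sum => i /leSk; rewrite muln1.
Qed.

End CardCover.

Lemma edge_gp_set_card_leq_cover (T : finType) (g : rel T)
    (S : {set {set T}}) (C : seq (T * seq T)) :
  edge_gp_set g S -> ip_edge_cover g C -> #|S| <= 2 * size C.
Proof.
move=> [sub_S_edges gpS] [geoC covC].
apply: (@card_covered_leq _ _ 2 C (fun c => walk_edges c.1 c.2)).
  apply/subsetP => e /(subsetP sub_S_edges) /covC [c Cc ec].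
  by rewrite (big_rem c Cc) inE ec.
by move=> c /geoC /gpS.
Qed.

Theorem lemma2p2 (T : finType) (g : rel T) :
  simple_graph g -> connected_graph g ->
  forall a b : nat, is_gpe g a -> is_ipe g b -> a <= 2 * b.
Proof.
move=> _ _ a b [[S [gpS <-]] _] [[C [coverC <-]] _].
exact: edge_gp_set_card_leq_cover gpS coverC.
Qed.
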